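(* Let $X$ be a topological space, $Y$ a $T_1$ topological space, $\pi: X \to Y$ a continuous surjection, and $y \in Y$. Let $Y^y$ be the quotient space of $X$ obtained by identifying each fiber $\pi^{-1}(y')$ with $y' \neq y$ to a single point while leaving every point of $\pi^{-1}(y)$ as its own class, let $p^y: X \to Y^y$ be the quotient map, and let $\pi^y: Y^y \to Y$ be the unique map with $\pi = \pi^y \circ p^y$. Then the restriction $p^y|_{\pi^{-1}(y)}: \pi^{-1}(y) \to (\pi^y)^{-1}(y)$ is a homeomorphism (with the subspace topologies from $X$ and $Y^y$ respectively). *)

From HB Require Import structures.
From mathcomp Require Import all_boot all_order all_algebra.
From mathcomp Require Import all_classical all_reals all_analysis.
From mathcomp Require Import generic_quotient.

Set Implicit Arguments.
Unset Strict Implicit.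
Unset Printing Implicit Defensive.

Local Open Scope classical_set_scope.
Local Open Scope quotient_scope.

Definition homeomorphism {A B : topologicalType} (f : A -> B) : Prop :=
  exists g : B -> A, [/\ cancel f g, cancel g f, continuous f & continuous g].

(* The equivalence relation on X whose classes are the fibers pi^-1(y')
   for y' <> y, and the singletons {x} for x in pi^-1(y). *)
Definition fiber_relb {X Y : topologicalType} (pi : X -> Y) (y : Y) : rel X :=
  fun x1 x2 => (x1 == x2) || ((pi x1 == pi x2) && (pi x1 != y)).

Lemma fiber_relb_equiv {X Y : topologicalType} (pi : X -> Y) (y : Y) :
  equiv_class_of (fiber_relb pi y).
Proof.
split.
- by move=> x; rewrite /fiber_relb eqxx.
- move=> a b; rewrite /fiber_relb eq_sym; congr (_ || _).
  by case: (eqVneq (pi a) (pi b)) => [->|]; rewrite ?andbF // eq_sym.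
- move=> b a c; rewrite /fiber_relb.
  case/orP => [/eqP -> //|/andP[/eqP ab ay]].
  case/orP => [/eqP <-|/andP[/eqP bc by_]].
    by rewrite ab eqxx -ab ay orbT.
  by rewrite ab bc eqxx -bc -ab (negbTE ay) orbT.
Qed.

Definition fiber_rel {X Y : topologicalType} (pi : X -> Y) (y : Y) :
  equiv_rel X := EquivRelPack (fiber_relb_equiv pi y).

Notation Yy f z := (quotient_topology {eq_quot (fiber_rel f z)}).

Definition py {X Y : topologicalType} (pi : X -> Y) (y : Y) : X -> Yy pi y :=
  \pi_(Yy pi y).

Definition piy {X Y : topologicalType} (pi : X -> Y) (y : Y) : Yy pi y -> Y :=
  fun q => pi (repr q).
Arguments piy {X Y} pi y q.
Arguments py {X Y} pi y x.

Lemma piyK {X Y : topologicalType} (pi : X -> Y) (y : Y) (x : X) :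
  piy pi y (py pi y x) = pi x.
Proof.
rewrite /piy /py.
have : fiber_relb pi y (repr (\pi_(Yy pi y) x)) x.
  change (fiber_rel pi y (repr (\pi_(Yy pi y) x)) x).
  by apply/eqmodP; rewrite reprK.
by rewrite /fiber_relb => /orP[/eqP -> //|/andP[/eqP -> _]].
Qed.

Definition py_restr {X Y : topologicalType} (pi : X -> Y) (y : Y)
  (x : set_type (pi @^-1` [set y])) : set_type (piy pi y @^-1` [set y]) :=
  exist _ (py pi y (val x))
    (mem_set (etrans (piyK pi y (val x)) (set_mem (valP x)))).
Arguments py_restr {X Y} pi y x.

(* The inverse of p^y on the fiber over y is [repr].  It is continuous because
   an open set U of X meets pi^-1(y) in the same points as the open set
   V = U ∪ pi^-1(Y \ {y}) (open since {y} is closed), and V is a union of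
   classes, so its image under the quotient map is open in Y^y. *)

From HB Require Import structures.
From mathcomp Require Import all_boot all_order all_algebra.
From mathcomp Require Import all_classical all_reals all_analysis.
From mathcomp Require Import generic_quotient.

Set Implicit Arguments.
Unset Strict Implicit.
Unset Printing Implicit Defensive.

Local Open Scope classical_set_scope.
Local Open Scope quotient_scope.

Lemma open_pi_image (T : topologicalType) (Q : quotType T) (V : set T) :
  let piQ := \pi_(quotient_topology Q) in
  open V -> (forall a b, piQ a = piQ b -> V b -> V a) -> open (piQ @` V).
Proof.
move=> piQ oV satV; rewrite /open /= /quotient_open.
suff -> : piQ @^-1` (piQ @` V) = V by [].
rewrite eqEsubset; split => [a [b Vb ab]|a Va]; last by exists a.
exact: satV (esym ab) Vb.
Qed.

Section fiber_quotient.
Context (X Y : topologicalType) (pi : X -> Y) (y : Y).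

Lemma eq_py (a b : X) : py pi y a = py pi y b <-> fiber_relb pi y a b.
Proof.
by split=> [ab|r]; [change (fiber_rel pi y a b); apply/eqmodP|apply/eqmodP].
Qed.

Lemma py_fiberK (x : X) : pi x = y -> repr (py pi y x) = x.
Proof.
move=> pxy; have /eq_py : py pi y (repr (py pi y x)) = py pi y x.
  by rewrite /py reprK.
by rewrite /fiber_relb => /orP[/eqP //|/andP[/eqP ->]]; rewrite pxy eqxx.
Qed.

Definition py_restr_inv (q : set_type (piy pi y @^-1` [set y])) :
    set_type (pi @^-1` [set y]) :=
  exist _ (repr (val q)) (valP q).

Lemma py_restrK : cancel (py_restr pi y) py_restr_inv.
Proof.
move=> [x xy]; apply: eq_sig_hprop => [*|/=]; first exact: Prop_irrelevance.
exact/py_fiberK/set_mem.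
Qed.

Lemma py_restr_invK : cancel py_restr_inv (py_restr pi y).
Proof.
move=> [q qy]; apply: eq_sig_hprop => [*|/=]; first exact: Prop_irrelevance.
by rewrite /py reprK.
Qed.

Lemma py_restr_continuous : continuous (py_restr pi y).
Proof.
apply: continuous_comp_initial => x.
apply: (@continuous_comp _ X); first exact: initial_continuous.
exact: pi_continuous.
Qed.

Lemma py_restr_inv_continuous :
  closed [set y] -> continuous pi -> continuous py_restr_inv.
Proof.
move=> cly cpi; apply: continuous_comp_initial; apply/continuousP => U oU.
pose V := U `|` pi @^-1` (~` [set y]).
have oV : open V.
  by apply: openU => //; apply: (continuousP _).1 cpi _ (closed_openC cly).
have satV a b : py pi y a = py pi y b -> V b -> V a.
  move/eq_py => /orP[/eqP -> //|/andP[/eqP ab ay] _].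
  by right; apply/eqP.
exists (py pi y @` V); first exact: open_pi_image.
rewrite eqEsubset; split => [[q qy] /= [v Vv vq]|[q qy] /= Uq].
  have {}vq : py pi y v = q := vq.
  have pvy : pi v = y by rewrite -(piyK pi y v) vq; exact: set_mem qy.
  by case: Vv => // Uv; change (U (repr q)); rewrite -vq py_fiberK.
by exists (repr q); [left|rewrite /py reprK].
Qed.

End fiber_quotient.
Arguments py_restr_inv {X Y} pi y q.

Theorem proposition4p1 (X Y : topologicalType) (pi : X -> Y) (y : Y) :
  accessible_space Y -> continuous pi -> (forall y' : Y, exists x : X, pi x = y') ->
  homeomorphism (py_restr pi y).
Proof.
move=> T1 cpi _; exists (py_restr_inv pi y); split.
- exact: py_restrK.
- exact: py_restr_invK.
- exact: py_restr_continuous.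
- have cly : closed [set y] by move=> ?; exact: accessible_closed_set1.
  exact: py_restr_inv_continuous cly cpi.
Qed.
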